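(* Let $A$ be a sincere Nakayama algebra over an algebraically closed field $K$ with $n$ simple modules. Then $A$ has finite global dimension if and only if $A$ has a unique (up to isomorphism) indecomposable projective module of dimension $n$, i.e. exactly one index $i$ with $c_i=n$ in its Kupisch series. Moreover, for such algebras of finite global dimension, after cyclically rotating the Kupisch series so that $c_0=n$, the map sending $A$ with Kupisch series $[c_0,\dots,c_{n-1}]$ to the Dyck path $D$ with area sequence \[ [c_1-n+1,\ c_2-n+1,\ \dots,\ c_{n-1}-n+1,\ 1] \] is a bijection between (isomorphism classes of) sincere Nakayama algebras of finite global dimension with $n$ simple modules and Dyck paths of semilength $n-1$. Furthermore, \[ \operatorname{gldim} A = 2\cdot b_D, \] where $b_D$ is the bounce count of $D$.
   Context: Nakayama algebras are connected finite-dimensional algebras all of whose indecomposable modules are uniserial; they are given as bound quiver algebras $KQ/I$ with $Q$ the linear quiver $0\to1\to\cdots\to n-1$ or the cyclic quiver $0\to1\to\cdots\to n-1\to 0$ and $I$ admissible. Such an algebra is determined up to isomorphism by its Kupisch series $[c_0,\dots,c_{n-1}]$, $c_i=\dim_K e_iA$ (indices extended mod $n$); for cyclic ones, Kupisch series are exactly the sequences with $c_{i+1}+1\ge c_i\ge 2$ for all $i$ (indices mod $n$), and cyclic rotations of the Kupisch series give isomorphic algebras. An algebra is sincere if every indecomposable projective module has every simple module as a composition factor. A Dyck path of semilength $m$ is a lattice path from $(0,0)$ to $(2m,0)$ with steps $(1,1),(1,-1)$ never going below the $x$-axis. Its area sequence $[c_0,\dots,c_m]$ is defined by letting $c_k$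 be the largest integer such that $(2k+c_k-1,c_k-1)$ lies on the path; area sequences of Dyck paths of semilength $m$ are exactly the sequences with $c_{i+1}+1\ge c_i\ge 2$ for $0\le i\le m-1$ and $c_m=1$. The bounce path of a Dyck path with area sequence $[c_0,\dots,c_m]$: set $b_0=0$ and $b_{t+1}=b_t+c_{b_t}-1$ (from $(2b_t,0)$ the bounce path takes $c_{b_t}-1$ up steps then $c_{b_t}-1$ down steps, arriving at $(2b_{t+1},0)$); the bounce count $b_D$ is the number $d$ of steps until $b_d=m$. *)

(* Nakayama algebras are modelled by their Kupisch series. *)
From mathcomp Require Import all_boot.
Set Implicit Arguments. Unset Strict Implicit. Unset Printing Implicit Defensive.

Definition kc (n : nat) (c : seq nat) (i : nat) : nat := nth 0 c (i %% n).

(* cyclic quiver 0 -> 1 -> ... -> n-1 -> 0 *)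
Definition kupisch_cyclic (n : nat) (c : seq nat) : Prop :=
  size c = n /\ forall i, i < n -> 2 <= kc n c i /\ kc n c i <= kc n c i.+1 + 1.

(* linear quiver 0 -> 1 -> ... -> n-1 *)
Definition kupisch_linear (n : nat) (c : seq nat) : Prop :=
  size c = n /\ nth 0 c n.-1 = 1 /\
  forall i, i < n.-1 -> 2 <= nth 0 c i /\ nth 0 c i <= nth 0 c i.+1 + 1.

Definition nakayama (n : nat) (c : seq nat) : Prop :=
  0 < n /\ (kupisch_cyclic n c \/ kupisch_linear n c).

(* isomorphism of Nakayama algebras = cyclic rotation of the Kupisch series *)
Definition nak_iso (n : nat) (c c' : seq nat) : Prop :=
  exists k, k < n /\ c' = rot k c.

(* Indecomposable modules: uniserial M(i,l) with top S_i, length l,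
   1 <= l <= c_i, composition factors S_i, S_{i+1}, ..., S_{i+l-1} (mod n).
   The projective P_i = e_i A is M(i, c_i). *)
Definition indec (n : nat) (c : seq nat) (M : nat * nat) : Prop :=
  M.1 < n /\ 0 < M.2 /\ M.2 <= kc n c M.1.

(* S_j is a composition factor of P_i *)
Definition comp_factor_proj (n : nat) (c : seq nat) (i j : nat) : Prop :=
  exists t, t < kc n c i /\ (i + t) %% n = j.

Definition sincere (n : nat) (c : seq nat) : Prop :=
  forall i j, i < n -> j < n -> comp_factor_proj n c i j.

(* syzygy (kernel of the projective cover P_i -> M(i,l));  None = zero module *)
Definition syz (n : nat) (c : seq nat) (M : nat * nat) : option (nat * nat) :=
  if M.2 < kc n c M.1 then Some ((M.1 + M.2) %% n, kc n c M.1 - M.2) else None.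

Definition omega (n : nat) (c : seq nat) (k : nat) (M : nat * nat) : option (nat * nat) :=
  iter k (fun o => obind (syz n c) o) (Some M).

(* pd M <= d  iff  Omega^(d+1) M = 0 *)
Definition pdim_le (n : nat) (c : seq nat) (M : nat * nat) (d : nat) : Prop :=
  omega n c d.+1 M = None.

Definition gldim_le (n : nat) (c : seq nat) (d : nat) : Prop :=
  forall M, indec n c M -> pdim_le n c M d.

Definition finite_gldim (n : nat) (c : seq nat) : Prop := exists d, gldim_le n c d.

Definition is_gldim (n : nat) (c : seq nat) (g : nat) : Prop :=
  gldim_le n c g /\ forall d, gldim_le n c d -> g <= d.

(* a path is a list of steps: true = (1,1), false = (1,-1) *)
Definition height (p : seq bool) (j : nat) : nat :=
  count id (take j p) - count negb (take j p).

Definition dyck (m : nat) (p : seq bool) : Prop :=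
  size p = (2 * m)%N /\
  (forall j, j <= 2 * m -> count negb (take j p) <= count id (take j p)) /\
  count id p = count negb p.

Definition on_path (p : seq bool) (x y : nat) : bool :=
  (x <= size p) && (height p x == y).

Definition area_seq (p : seq bool) : seq nat :=
  let m := (size p %/ 2)%N in
  [seq \max_(1 <= t < (2 * m).+2 | on_path p (2 * k + t - 1) (t - 1)) t
  | k <- iota 0 m.+1].

Definition bounce_step (a : seq nat) (b : nat) : nat := b + nth 0 a b - 1.

Definition bounce_count (p : seq bool) : nat :=
  let m := (size p %/ 2)%N in
  let a := area_seq p in
  find (fun d => iter d (bounce_step a) 0 == m) (iota 0 m.+1).

Definition nak_to_area (n : nat) (c : seq nat) : seq nat :=
  [seq x - n.-1 | x <- behead c] ++ [:: 1].

(* representatives of the iso classes considered: sincere, finite gldim, c_0 = n *)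
Definition normalized (n : nat) (c : seq nat) : Prop :=
  nakayama n c /\ sincere n c /\ finite_gldim n c /\ nth 0 c 0 = n.

(* Sincerity forces [c_i >= n] for all [i], and the syzygy of the uniserial
   module [(i, l)] (top [S_i], length [l < c_i]) is [(i + l, c_i - l)].  If no
   [c_i] equals [n], syzygies alternate between lengths [n] and [c_i - n] and
   never vanish; if [c_p = c_q = n] with [p < q], the modules [(p, q - p)] and
   [(q, n - q + p)] are syzygies of each other; either way the global
   dimension is infinite.  If exactly one [c_i] equals [n], rotate so that
   [c_0 = n]: the syzygies of [(0, l)] are
   [(l, n - l)] and then [(0, G l)] with [G x = x + c_x - n], a monotone map
   fixing [n] with [x < G x] for [0 < x < n], and a potential argument shows
   that no module outlives the simple module [S_0 = (0, 1)].  Hence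
   [gldim A = 2 T], where [T] is the number of iterations of [G] taking [1] to
   [n].  As [G (b + 1) = b + a_b] with [a_b = c_(b+1) - n + 1], this is one
   more than the bounce step, so [T] is the bounce count of the Dyck path with
   area sequence [a]; that path exists and is unique because its [k]-th down
   step must sit at abscissa [2k + a_k - 1]. *)

From mathcomp Require Import all_boot zify.
Set Implicit Arguments. Unset Strict Implicit. Unset Printing Implicit Defensive.

Lemma modn_subn n x : n <= x < n + n -> x %% n = x - n.
Proof. by move=> /andP[nx xn]; rewrite -{1}(subnK nx) modnDr modn_small //; lia. Qed.

Lemma nth_rot (T : Type) (x0 : T) (s : seq T) k i : k <= size s -> i < size s ->
  nth x0 (rot k s) i = nth x0 s ((k + i) %% size s).
Proof.
move=> ks iS; rewrite /rot nth_cat size_drop nth_drop.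
case: ltnP => h; first by rewrite modn_small //; lia.
by rewrite nth_take ?modn_subn; [congr nth|..]; lia.
Qed.

Lemma count_mem_rot (T : eqType) (s : seq T) k x : count_mem x (rot k s) = count_mem x s.
Proof. by apply/permP; rewrite perm_rot. Qed.

Lemma nth_rot_index (T : eqType) (x0 : T) (s : seq T) x :
  x \in s -> nth x0 (rot (index x s) s) 0 = x.
Proof.
move=> xs; have ix : index x s < size s by rewrite index_mem.
by rewrite nth_rot ?addn0 ?modn_small ?nth_index //; lia.
Qed.

Lemma count_mem_head (T : eqType) (x0 : T) (s : seq T) x : 0 < size s -> nth x0 s 0 = x ->
  count_mem x s = (count_mem x (behead s)).+1.
Proof. by case: s => //= y s _ ->; rewrite eqxx. Qed.

Section Kupisch.

Variable n : nat.
Implicit Type c : seq nat.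

Lemma kc_modn c i : kc n c (i %% n) = kc n c i.
Proof. by rewrite /kc modn_mod. Qed.

Lemma kcS_modn c i : kc n c (i %% n).+1 = kc n c i.+1.
Proof. by rewrite /kc -[(i %% n).+1]addn1 -[i.+1]addn1 modnDml. Qed.

Lemma kc_small c i : i < n -> kc n c i = nth 0 c i.
Proof. by move=> lt_in; rewrite /kc modn_small. Qed.

Lemma kc0E c : kc n c 0 = nth 0 c 0.
Proof. by rewrite /kc mod0n. Qed.

Lemma kcn c : kc n c n = kc n c 0.
Proof. by rewrite /kc modnn mod0n. Qed.

Lemma kc_rot c k i : 0 < n -> size c = n -> k < n ->
  kc n (rot k c) i = kc n c (i + k).
Proof.
move=> n0 sz kn; rewrite /kc nth_rot ?size_rot sz; [|lia|exact: ltn_pmod].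
by rewrite addnC modnDml.
Qed.

Definition sincere_kupisch c :=
  [/\ size c = n, forall i, n <= kc n c i & forall i, kc n c i <= kc n c i.+1 + 1].

Lemma sincere_kc_ge c i : 0 < n -> sincere n c -> n <= kc n c i.
Proof.
move=> n0 Hs; rewrite -kc_modn; have ilt : i %% n < n by rewrite ltn_pmod.
have [t [ht E]] := Hs _ ((i %% n + n.-1) %% n) ilt (ltn_pmod _ n0).
rewrite leqNgt; apply/negP => hlt.
have tn : t < n.-1 by lia.
have : t %% n = n.-1 %% n by apply/eqP; rewrite -(eqn_modDl (i %% n)) E.
by rewrite !modn_small //; lia.
Qed.

Lemma nakayama_sincere_kupisch c : nakayama n c -> sincere n c -> sincere_kupisch c.
Proof.
move=> [n0 [[sz Hc]|[sz [Hl _]]]] Hs.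
  split=> // i; first exact: sincere_kc_ge.
  by rewrite -kc_modn -kcS_modn; case: (Hc (i %% n) (ltn_pmod _ n0)).
have n1 : n = 1.
  have [t [ht E]] := Hs n.-1 0 (ltac:(lia)) n0.
  move: ht E; rewrite kc_small ?Hl; last lia.
  by move=> /[!ltnS] /[!leqn0] /eqP-> /[!addn0]; rewrite modn_small; lia.
have c0 : nth 0 c 0 = 1 by rewrite n1 in Hl.
by split=> // i; rewrite /kc n1 !modn1 c0.
Qed.

(* [[:: 1]], the Kupisch series of [K], is the only one with a linear quiver. *)
Lemma sincere_kupisch_nakayama c : 0 < n -> sincere_kupisch c -> nakayama n c /\ sincere n c.
Proof.
move=> n0 [sz kge kle]; split.
  split=> //; have [/andP[/eqP n1 /eqP c0]|cyc] := boolP ((n == 1) && (kc n c 0 == 1)).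
    by right; split=> //; rewrite n1 -kc0E; split.
  left; split=> // i _; split=> //; have [n1|] := eqVneq n 1; last by have := kge i; lia.
  rewrite -kc_modn n1 modn1; move: cyc (kge 0); rewrite n1 eqxx /= => /eqP; lia.
move=> i j lt_in lt_jn; exists ((j + n - i) %% n); split.
  exact: leq_trans (ltn_pmod _ n0) (kge i).
by rewrite modnDmr (_ : i + (j + n - i) = j + n) ?modnDr ?modn_small //; lia.
Qed.

Lemma sincere_kupisch_rot c k : 0 < n -> k < n -> sincere_kupisch c ->
  sincere_kupisch (rot k c).
Proof.
move=> n0 kn [sz kge kle]; split; first by rewrite size_rot.
  by move=> i; rewrite kc_rot.
by move=> i; rewrite !kc_rot // addSn.
Qed.

End Kupisch.

Section Syzygies.

Variables (n : nat) (c : seq nat).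

Lemma omega_None k : iter k (fun o => obind (syz n c) o) None = None.
Proof. by elim: k => //= k ->. Qed.

Lemma omegaS k M : omega n c k.+1 M = obind (syz n c) (omega n c k M).
Proof. by rewrite /omega iterS. Qed.

Lemma omegaSr k M :
  omega n c k.+1 M = if syz n c M is Some M' then omega n c k M' else None.
Proof. by rewrite /omega iterSr /=; case: (syz n c M) => //; exact: omega_None. Qed.

Lemma omega_None_mono k k' M : k <= k' -> omega n c k M = None -> omega n c k' M = None.
Proof. by move=> /subnK <- Mk; elim: (k' - k) => // j IH; rewrite addSn omegaS IH. Qed.

Lemma omega_None_potential (P : nat * nat -> Prop) (B : nat * nat -> nat) :
  (forall M, P M -> syz n c M = None \/
     exists M', [/\ syz n c M = Some M', P M' & B M' < B M]) ->
  forall M, P M -> omega n c (B M).+1 M = None.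
Proof.
move=> Hdec; suff : forall b M, B M <= b -> P M -> omega n c b.+1 M = None.
  by move=> Hb M PM; exact: Hb.
elim=> [|b IH] M HB PM; rewrite omegaSr;
  case: (Hdec M PM) => [->|[M' [-> PM' lt_B]]] //; first lia.
by apply: IH => //; lia.
Qed.

Lemma not_finite_gldim_syz_closed (Q : nat * nat -> Prop) M :
  indec n c M -> Q M -> (forall M, Q M -> exists M', syz n c M = Some M' /\ Q M') ->
  ~ finite_gldim n c.
Proof.
move=> HM QM Hsyz [d Hd].
have : forall k, exists M', omega n c k M = Some M' /\ Q M'.
  elim=> [|k [M' [Ek QM']]]; first by exists M.
  by have [M'' [E' Q'']] := Hsyz M' QM'; exists M''; rewrite omegaS Ek /= E'.
by move=> /(_ d.+1) [M' [E _]]; move: (Hd M HM); rewrite /pdim_le E.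
Qed.

Lemma syz_indec M M' : 0 < n -> sincere_kupisch n c -> indec n c M ->
  syz n c M = Some M' -> indec n c M'.
Proof.
case: M => i l n0 [_ kge kle] [/= _ [l0 _]]; rewrite /syz /=.
case: ltnP => // lt_lk [<-]; rewrite /indec /= kc_modn.
have : kc n c i <= kc n c (i + l) + l.
  elim: l {l0 lt_lk} => [|l IH]; first by rewrite !addn0.
  by apply: (leq_trans IH); have := kle (i + l); rewrite -addnS; lia.
by split; [exact: ltn_pmod|lia].
Qed.

End Syzygies.

Section Rotation.

Variables (n : nat) (c : seq nat).

Definition shift_module k (M : nat * nat) := ((M.1 + k) %% n, M.2).

Lemma syz_rot k M : 0 < n -> size c = n -> k < n ->
  syz n c (shift_module k M) = omap (shift_module k) (syz n (rot k c) M).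
Proof.
move=> n0 sz kn; case: M => i l; rewrite /syz /shift_module /= kc_modn kc_rot //.
by case: ifP => //= _; rewrite !modnDml addnAC.
Qed.

Lemma omega_rot k j M : 0 < n -> size c = n -> k < n ->
  omega n c j (shift_module k M) = omap (shift_module k) (omega n (rot k c) j M).
Proof.
move=> n0 sz kn; elim: j => // j IH; rewrite !omegaS IH.
by case: (omega n (rot k c) j M) => //= M'; exact: syz_rot.
Qed.

Lemma gldim_le_rot k d : 0 < n -> size c = n -> k < n ->
  gldim_le n c d <-> gldim_le n (rot k c) d.
Proof.
move=> n0 sz kn; split=> Hd [i l] [/= lt_in [l0 lt_lk]].
  have HM : indec n c (shift_module k (i, l)).
    by split; [exact: ltn_pmod|rewrite /= kc_modn -kc_rot].
  by move: (Hd _ HM); rewrite /pdim_le omega_rot //; case: omega.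
pose j := (i + (n - k)) %% n.
have Ej : shift_module k (j, l) = (i, l).
  by rewrite /shift_module /= modnDml -addnA subnK ?modnDr ?modn_small //; lia.
have HM : indec n (rot k c) (j, l).
  split; first exact: ltn_pmod.
  by rewrite /= kc_rot // -kc_modn; case: Ej => ->.
by move: (Hd _ HM); rewrite /pdim_le -Ej omega_rot // => ->.
Qed.

Lemma is_gldim_rot k d : 0 < n -> size c = n -> k < n ->
  is_gldim n (rot k c) d -> is_gldim n c d.
Proof.
move=> n0 sz kn [le_d min_d]; split; first exact/(gldim_le_rot d n0 sz kn).
by move=> d' /(gldim_le_rot d' n0 sz kn); apply: min_d.
Qed.

End Rotation.

Lemma find_iota_le (P : pred nat) N k : k < N -> P k -> find P (iota 0 N) <= k.
Proof.
move=> kN Pk; rewrite leqNgt; apply/negP => lt_kf.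
by have := before_find 0 lt_kf; rewrite nth_iota // add0n Pk.
Qed.

Section BounceMap.

Variables (n : nat) (c : seq nat).
Hypotheses (n_gt0 : 0 < n) (Hc : sincere_kupisch n c) (kc0 : kc n c 0 = n).
Hypothesis kc_neq : forall i, 0 < i < n -> kc n c i != n.

Definition bounce_map x := x + kc n c x - n.

Definition bounce_time x := find (fun d => iter d bounce_map x == n) (iota 0 n).

Lemma bounce_map_mono : {homo bounce_map : x y / x <= y}.
Proof.
have [_ _ kle] := Hc.
have : {homo (fun x => x + kc n c x) : x y / x <= y}.
  by apply: homo_leq => [//|y x z|i]; [exact: leq_trans | have := kle i; lia].
by move=> mono_end x y /mono_end; apply: leq_sub2r.
Qed.

Lemma leq_bounce_map x : x <= bounce_map x.
Proof. by have [_ kge _] := Hc; have := kge x; rewrite /bounce_map; lia. Qed.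

Lemma bounce_map_n : bounce_map n = n.
Proof. by rewrite /bounce_map kcn kc0 addnK. Qed.

Lemma bounce_map_le x : x <= n -> bounce_map x <= n.
Proof. by move=> /bounce_map_mono; rewrite bounce_map_n. Qed.

Lemma bounce_map_gt x : 0 < x < n -> x < bounce_map x.
Proof.
have [_ kge _] := Hc; move=> xn; have := kge x; have /eqP := kc_neq xn.
by rewrite /bounce_map; lia.
Qed.

Lemma iter_bounce_map_le k x : x <= n -> iter k bounce_map x <= n.
Proof. by move=> xn; elim: k => //= k; apply: bounce_map_le. Qed.

Lemma iter_bounce_map_mono k x y : x <= y -> iter k bounce_map x <= iter k bounce_map y.
Proof. by move=> le_xy; elim: k => //= k; apply: bounce_map_mono. Qed.

Lemma leq_iter_bounce_map k x : x <= iter k bounce_map x.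
Proof. by elim: k => //= k IH; apply: (leq_trans IH); apply: leq_bounce_map. Qed.

(* Each bounce strictly advances until [n] is reached. *)
Lemma iter_bounce_map_n x : 0 < x <= n -> iter n.-1 bounce_map x = n.
Proof.
move=> xn; suff : minn n (x + n.-1) <= iter n.-1 bounce_map x.
  by have := iter_bounce_map_le n.-1 (proj2 (andP xn)); lia.
elim: n.-1 => [|k IH] /=; first lia.
have := iter_bounce_map_le k (proj2 (andP xn)).
set y := iter k bounce_map x in IH *.
have [-> _|lt_yn] := eqVneq y n; first by rewrite bounce_map_n; lia.
by have := @bounce_map_gt y; lia.
Qed.

Lemma bounce_timeP x : 0 < x <= n ->
  bounce_time x < n /\ iter (bounce_time x) bounce_map x = n.
Proof.
move=> xn; have hs : has (fun d => iter d bounce_map x == n) (iota 0 n).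
  by apply/hasP; exists n.-1; rewrite ?mem_iota ?iter_bounce_map_n //; lia.
have lt_Tn : bounce_time x < n by move: hs; rewrite has_find size_iota.
by split=> //; have := nth_find 0 hs; rewrite nth_iota // => /eqP.
Qed.

Lemma before_bounce_time x k : k < bounce_time x -> iter k bounce_map x != n.
Proof.
move=> lt_kT; have := before_find 0 lt_kT; rewrite nth_iota ?add0n => [->//|].
by apply: (leq_trans lt_kT); apply: leq_trans (find_size _ _) _; rewrite size_iota.
Qed.

Lemma bounce_time_le x k : 0 < x <= n -> iter k bounce_map x = n -> bounce_time x <= k.
Proof.
move=> xn Ek; case: (ltnP k n) => kn; first by apply: find_iota_le; rewrite ?Ek.
by have [lt_Tn _] := bounce_timeP xn; lia.
Qed.

Lemma bounce_time_anti x y : 0 < x -> x <= y -> y <= n -> bounce_time y <= bounce_time x.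
Proof.
move=> x0 le_xy yn; have [_ Ex] := @bounce_timeP x (ltac:(lia)).
apply: bounce_time_le; first lia.
have := iter_bounce_map_mono (bounce_time x) le_xy.
have := iter_bounce_map_le (bounce_time x) yn; lia.
Qed.

Lemma bounce_time_gt0 x : 0 < x < n -> 0 < bounce_time x.
Proof.
move=> xn; have [_] := @bounce_timeP x (ltac:(lia)).
by case: (bounce_time x) => //= E; lia.
Qed.

Lemma bounce_timeS x : 0 < x < n -> bounce_time x = (bounce_time (bounce_map x)).+1.
Proof.
move=> xn; have := leq_bounce_map x; have := @bounce_map_le x (ltac:(lia)) => Gn Gx.
have [_ Ex] := @bounce_timeP x (ltac:(lia)).
have [_ Ey] := @bounce_timeP (bounce_map x) (ltac:(lia)).
have T0 := bounce_time_gt0 xn.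
apply/eqP; rewrite eqn_leq; apply/andP; split.
  by apply: bounce_time_le; rewrite ?iterSr //; lia.
by rewrite -(prednK T0) ltnS; apply: bounce_time_le; rewrite -?iterSr ?prednK //; lia.
Qed.


(* Along [(0, l) -> (l, n - l) -> (0, bounce_map l) -> ...] every bounce
   costs two syzygies; [syz_potential M] bounds the number of syzygies of [M]
   before it vanishes. *)
Definition syz_potential (M : nat * nat) :=
  let: (i, l) := M in
  if i == 0 then 2 * bounce_time l
  else if i + l <= n then (2 * bounce_time i).-1
  else 2 * maxn (bounce_time (i + l - n)) (bounce_time i).-1.

Lemma syz_potential_decr M M' : indec n c M -> syz n c M = Some M' ->
  syz_potential M' < syz_potential M.
Proof.
case: M => i l [/= lt_in [l0 _]]; rewrite /syz /=; case: ltnP => // lt_lk [<-] /=.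
have [_ kge _] := Hc; have := kge i => le_n_kc.
have [i0|i0] := eqVneq i 0.
  subst i; rewrite kc0 in lt_lk *; rewrite add0n modn_small // subnKC; last lia.
  by rewrite leqnn; case: eqP => [|_]; [lia | have := @bounce_time_gt0 l; lia].
have Gi := @bounce_map_le i (ltac:(lia)); have iG := @bounce_map_gt i (ltac:(lia)).
move: Gi iG; rewrite {1 2}/bounce_map => Gi iG.
have [lt_iln|le_n_il] := ltnP (i + l) n.
  rewrite modn_small // (ltnW lt_iln).
  have -> : (i + l == 0) = false by lia.
  have -> : (i + l + (kc n c i - l) <= n) = false by lia.
  rewrite (_ : _ - n = bounce_map i); last by rewrite /bounce_map; lia.
  have := @bounce_time_anti i (i + l) (ltac:(lia)) (ltac:(lia)) (ltac:(lia)).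
  by have := @bounce_timeS i (ltac:(lia)); have := @bounce_time_gt0 i (ltac:(lia)); lia.
have [eq_iln|gt_iln] := eqVneq (i + l) n.
  rewrite eq_iln modnn eqxx leqnn (_ : _ - l = bounce_map i); last by rewrite /bounce_map; lia.
  by have := @bounce_timeS i (ltac:(lia)); lia.
rewrite modn_subn; last lia.
have -> : (i + l - n == 0) = false by lia.
have -> : (i + l - n + (kc n c i - l) <= n) = true by lia.
have -> : (i + l <= n) = false by lia.
by have := @bounce_time_gt0 (i + l - n) (ltac:(lia)); lia.
Qed.

Lemma syz_potential_le M : indec n c M -> syz_potential M <= 2 * bounce_time 1.
Proof.
case: M => i l [/= lt_in [l0 le_lk]]; rewrite /syz_potential.
have [i0|i0] := eqVneq i 0.
  by move: le_lk; rewrite i0 kc0 => le_ln; have := @bounce_time_anti 1 l erefl l0 le_ln; lia.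
have := @bounce_time_anti 1 i erefl (ltac:(lia)) (ltac:(lia)).
case: ifP => [_|/negbT gt_il]; first lia.
have := @bounce_map_le i (ltac:(lia)); rewrite /bounce_map => Gi.
have := @bounce_time_anti 1 (i + l - n) erefl (ltac:(lia)) (ltac:(lia)); lia.
Qed.

Lemma omega_even_simple0 k : k <= bounce_time 1 ->
  omega n c (2 * k) (0, 1) = Some (0, iter k bounce_map 1).
Proof.
elim: k => // k IH lt_kT; rewrite (_ : 2 * k.+1 = (2 * k).+2); last lia.
rewrite !omegaS IH ?(ltnW lt_kT) //= /syz /= kc0.
have := before_bounce_time lt_kT; have := iter_bounce_map_le k (ltac:(lia) : 1 <= n).
have := leq_iter_bounce_map k 1; set y := iter k bounce_map 1 => y1 yn /eqP y_neq.
have [_ kge _] := Hc; have := kge y => le_n_kc.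
rewrite ifT; last lia.
rewrite /= add0n modn_small; last lia.
rewrite ifT; last lia.
by rewrite subnKC ?modnn /bounce_map; [congr (Some (_, _)); lia | lia].
Qed.

Lemma is_gldim_bounce_time : is_gldim n c (2 * bounce_time 1).
Proof.
split=> [M HM | d Hd].
  apply: (@omega_None_mono _ _ (syz_potential M).+1); first by have := syz_potential_le HM.
  apply: (omega_None_potential (P := indec n c)) => // {}M {}HM.
  case E: (syz n c M) => [M'|]; [right; exists M' | by left].
  by split=> //; [exact: syz_indec E | exact: syz_potential_decr E].
rewrite leqNgt; apply/negP => lt_dT.
have HM : indec n c (0, 1) by rewrite /indec /= kc0.
have := omega_None_mono lt_dT (Hd _ HM).
by rewrite omega_even_simple0.
Qed.

End BounceMap.

Section FiniteGldim.

Variables (n : nat) (c : seq nat).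
Hypotheses (n_gt0 : 0 < n) (Hc : sincere_kupisch n c).

Lemma finite_gldim_rot k : k < n -> finite_gldim n c <-> finite_gldim n (rot k c).
Proof.
have [sz _ _] := Hc.
by move=> kn; split=> -[d Hd]; exists d; apply/(gldim_le_rot d n_gt0 sz kn).
Qed.

Lemma kc_neq_notin_behead : n \notin behead c -> forall i, 0 < i < n -> kc n c i != n.
Proof.
have [sz _ _] := Hc; move=> nc i /andP[i0 lt_in].
rewrite kc_small // -(prednK i0) -nth_behead; apply: contraNneq nc => <-.
by rewrite mem_nth // size_behead sz; lia.
Qed.

(* If every [c_i > n], the syzygies of [(i, n)] and [(i, c_i - n)] have
   lengths [c_i - n] and [n] again. *)
Lemma not_finite_gldim_no_max : n \notin c -> ~ finite_gldim n c.
Proof.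
have [sz kge _] := Hc; move=> nc.
have kc_gt i : n < kc n c i.
  have : kc n c i != n by apply: contraNneq nc => <-; rewrite /kc mem_nth // sz ltn_pmod.
  by have := kge i; lia.
apply: (@not_finite_gldim_syz_closed _ _
  (fun M => M.1 < n /\ (M.2 = n \/ M.2 = kc n c M.1 - n)) (0, n)) => //.
  by split=> //; left.
case=> i l [/= lt_in [->|->]]; rewrite /syz /=.
  rewrite kc_gt; eexists; split; first reflexivity.
  by rewrite /= modnDr modn_small //; split=> //; right.
rewrite ifT; last by have := kc_gt i; lia.
eexists; split; first reflexivity.
by split; [exact: ltn_pmod | left => /=; have := kc_gt i; lia].
Qed.

(* Two projectives [P_0] and [P_q] of length [n] make
   [(0, q)] and [(q, n - q)] syzygies of each other. *)
Lemma not_finite_gldim_two_max : nth 0 c 0 = n -> n \in behead c -> ~ finite_gldim n c.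
Proof.
have [sz _ _] := Hc; move=> c0 nc.
set q := (index n (behead c)).+1.
have lt_qn : q < n by move: nc; rewrite -index_mem size_behead sz /q; lia.
have kcq : kc n c q = n by rewrite kc_small // -nth_behead nth_index.
apply: (@not_finite_gldim_syz_closed _ _ (fun M => M = (0, q) \/ M = (q, n - q)) (0, q)).
- by rewrite /indec /= kc0E c0; lia.
- by left.
case=> i l [[-> ->]|[-> ->]]; rewrite /syz /=.
  rewrite kc0E c0 ifT // add0n modn_small //.
  by eexists; split; first reflexivity; right.
rewrite kcq ifT; last lia.
rewrite subnKC ?modnn; last lia.
by eexists; split; first reflexivity; left; congr (_, _); lia.
Qed.

Lemma is_gldim_max_unique : nth 0 c 0 = n -> n \notin behead c ->
  is_gldim n c (2 * bounce_time n c 1).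
Proof.
move=> c0 nc; apply: is_gldim_bounce_time => //; first by rewrite kc0E.
exact: kc_neq_notin_behead.
Qed.

End FiniteGldim.

Lemma finite_gldimP n c : 0 < n -> sincere_kupisch n c ->
  finite_gldim n c <-> count_mem n c = 1.
Proof.
move=> n0 Hc; have [sz _ _] := Hc.
have [nc|nc] := boolP (n \in c); last first.
  by move/count_memPn: (nc) => ->; split=> // /(not_finite_gldim_no_max n0 Hc nc).
have lt_in : index n c < n by rewrite -{2}sz index_mem.
rewrite (finite_gldim_rot n0 Hc lt_in) -(count_mem_rot c (index n c)).
have Hc' := sincere_kupisch_rot n0 lt_in Hc.
have c0 := nth_rot_index 0 nc.
move: (rot _ c) Hc' c0 => c' Hc' c0.
have [sz' _ _] := Hc'.
rewrite (count_mem_head _ c0) ?sz' //.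
have [nb|nb] := boolP (n \in behead c').
  split=> [/(not_finite_gldim_two_max n0 Hc' c0 nb) //|].
  by move=> [/count_memPn]; rewrite nb.
split=> _; first by move/count_memPn: nb => ->.
by have [le_gldim _] := is_gldim_max_unique n0 Hc' c0 nb; exists (2 * bounce_time n c' 1).
Qed.

Lemma count_id_negb (s : seq bool) : count id s + count negb s = size s.
Proof. exact: count_predC. Qed.

Definition downs (p : seq bool) x := count negb (take x p).

Lemma downs0 p : downs p 0 = 0.
Proof. by rewrite /downs take0. Qed.

Lemma downsS p x : x < size p -> downs p x.+1 = downs p x + ~~ nth false p x.
Proof. by move=> lt_xp; rewrite /downs (take_nth false lt_xp) -cats1 count_cat /= addn0. Qed.

Lemma downs_oversize p x : size p <= x -> downs p x = count negb p.
Proof. by move=> le_px; rewrite /downs take_oversize. Qed.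

Lemma downsS_le p x : downs p x.+1 <= (downs p x).+1.
Proof.
case: (ltnP x (size p)) => h; first by rewrite downsS // -addn1 leq_add2l leq_b1.
by rewrite !downs_oversize //; lia.
Qed.

Lemma downs_mono p : {homo downs p : x y / x <= y}.
Proof.
apply: homo_leq => [//|x y z|x]; first exact: leq_trans.
case: (ltnP x (size p)) => h; first by rewrite downsS // leq_addr.
by rewrite !downs_oversize //; lia.
Qed.

Lemma dyck_size m p : dyck m p -> size p = 2 * m.
Proof. by case. Qed.

Lemma dyck_downs_double m p x : dyck m p -> x <= 2 * m -> 2 * downs p x <= x.
Proof.
move=> [sz [Hp _]] xm; have := Hp x xm; have := count_id_negb (take x p).
by rewrite size_take sz /downs; case: ltnP; lia.
Qed.

Lemma dyck_downs_end m p : dyck m p -> downs p (2 * m) = m.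
Proof.
move=> [sz [_ E]]; rewrite downs_oversize ?sz //.
by have := count_id_negb p; rewrite sz E; lia.
Qed.

Lemma dyck_downs_le m p x : dyck m p -> downs p x <= m.
Proof.
move=> D; rewrite -(dyck_downs_end D); case: (leqP x (2 * m)); first exact: downs_mono.
by move=> lt_mx; rewrite !downs_oversize ?(dyck_size D) //; lia.
Qed.

(* On a Dyck path the height at [x] is [x - 2 * downs p x], so lying at
   height [t - 1] at abscissa [2k + t - 1] just says that [k] down steps
   have been taken. *)
Lemma on_path_downs m p k t : dyck m p -> 1 <= t ->
  on_path p (2 * k + t - 1) (t - 1) =
  (2 * k + t - 1 <= 2 * m) && (downs p (2 * k + t - 1) == k).
Proof.
move=> D t1; rewrite /on_path /height (dyck_size D).
case: leqP => //= le_x; have := dyck_downs_double D le_x.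
have := count_id_negb (take (2 * k + t - 1) p).
rewrite size_take (dyck_size D) /downs; case: ltnP => le_m E Hx; apply/eqP/eqP; lia.
Qed.

Lemma bigmax_id_eq N (P : pred nat) v : 1 <= v < N -> P v ->
  (forall t, 1 <= t < N -> P t -> t <= v) -> \max_(1 <= t < N | P t) t = v.
Proof.
move=> hv Pv Hv; apply/eqP; rewrite eqn_leq; apply/andP; split.
  by apply/bigmax_leqP_seq => t; rewrite mem_index_iota; exact: Hv.
by apply: (leq_bigmax_seq (F := id)); rewrite ?mem_index_iota.
Qed.

Lemma leq_bigmax_id N (P : pred nat) t : 1 <= t < N -> P t ->
  t <= \max_(1 <= t < N | P t) t.
Proof. by move=> ht Pt; apply: (leq_bigmax_seq (F := id)); rewrite ?mem_index_iota. Qed.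

Lemma bigmax_id_attained N (P : pred nat) t : 1 <= t < N -> P t ->
  let v := \max_(1 <= t < N | P t) t in 1 <= v < N /\ P v.
Proof.
move=> ht Pt v; suff : v = 0 \/ 1 <= v < N /\ P v.
  by case=> // v0; have := leq_bigmax_id ht Pt; rewrite -/v v0; lia.
rewrite /v big_seq_cond; apply: (big_ind (fun x => x = 0 \/ 1 <= x < N /\ P x)).
- by left.
- by move=> x y Kx Ky; case: (leqP x y).
- by move=> i /andP[hi Pi]; right; rewrite -mem_index_iota.
Qed.

Definition area_at (p : seq bool) m k :=
  \max_(1 <= t < (2 * m).+2 | on_path p (2 * k + t - 1) (t - 1)) t.

Lemma size_area_seq p : size (area_seq p) = (size p %/ 2).+1.
Proof. by rewrite /area_seq size_map size_iota. Qed.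

Lemma nth_area_seq m p k : size p = 2 * m -> k <= m -> nth 0 (area_seq p) k = area_at p m k.
Proof.
move=> sz km; rewrite /area_seq sz mulKn // (nth_map 0) ?size_iota //.
by rewrite nth_iota // add0n.
Qed.

Lemma unit_steps_surj (f : nat -> nat) N k : f 0 = 0 -> (forall x, f x.+1 <= (f x).+1) ->
  k <= f N -> exists2 x, x <= N & f x = k.
Proof.
move=> f0 fS; elim: N => [|N IH] le_kf; first by exists 0; move: le_kf; rewrite f0; lia.
case: (leqP k (f N)) => [/IH [x xN fx]|lt_fk]; first by exists x => //; lia.
by exists N.+1 => //; have := fS N; lia.
Qed.

Section AreaAt.

Variables (m : nat) (p : seq bool).
Hypothesis D : dyck m p.

Lemma on_path_downs_shift k x : x <= 2 * m -> downs p x = k ->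
  1 <= x - 2 * k + 1 < (2 * m).+2 /\
  on_path p (2 * k + (x - 2 * k + 1) - 1) ((x - 2 * k + 1) - 1).
Proof.
move=> xm dx; have := dyck_downs_double D xm; rewrite dx => x2.
split; first lia.
rewrite (on_path_downs _ D); last lia.
by rewrite (_ : 2 * k + (x - 2 * k + 1) - 1 = x) ?xm ?dx //; lia.
Qed.

Lemma area_at_max k x : x <= 2 * m -> downs p x = k -> x <= 2 * k + area_at p m k - 1.
Proof.
move=> xm dx; have [ht Pt] := on_path_downs_shift xm dx.
have := leq_bigmax_id (P := fun t => on_path p (2 * k + t - 1) (t - 1)) ht Pt.
by rewrite -/(area_at p m k); lia.
Qed.

Lemma area_at_spec k : k <= m -> 1 <= area_at p m k /\
  2 * k + area_at p m k - 1 <= 2 * m /\ downs p (2 * k + area_at p m k - 1) = k.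
Proof.
move=> km; have [x xm dx] := @unit_steps_surj (downs p) (2 * m) k (downs0 p) (downsS_le p)
  (ltac:(by rewrite (dyck_downs_end D))).
have [ht Pt] := on_path_downs_shift xm dx.
have [hv] := bigmax_id_attained (P := fun t => on_path p (2 * k + t - 1) (t - 1)) ht Pt.
move: hv; rewrite -/(area_at p m k) => hv.
by rewrite (on_path_downs _ D); [move=> /andP[? /eqP]; lia | lia].
Qed.

End AreaAt.

Lemma area_seq_inj m p q : dyck m p -> dyck m q -> area_seq p = area_seq q -> p = q.
Proof.
have downs_le p1 q1 : dyck m p1 -> dyck m q1 -> area_seq p1 = area_seq q1 ->
    forall x, x <= 2 * m -> downs q1 x <= downs p1 x.
  move=> Dp Dq E x xm; set k := downs p1 x.
  have km : k <= m := dyck_downs_le x Dp.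
  have EA : area_at p1 m k = area_at q1 m k.
    by rewrite -(nth_area_seq (dyck_size Dp) km) -(nth_area_seq (dyck_size Dq) km) E.
  have [_ [_ <-]] := area_at_spec Dq km; rewrite -EA; apply: downs_mono.
  exact: area_at_max.
move=> Dp Dq E; have downsE x : x <= 2 * m -> downs p x = downs q x.
  by move=> xm; apply/eqP; rewrite eqn_leq !downs_le.
apply: (eq_from_nth (x0 := false)) => [|i]; first by rewrite (dyck_size Dp) (dyck_size Dq).
rewrite (dyck_size Dp) => lt_im; have := downsE i.+1 lt_im.
rewrite !downsS ?(dyck_size Dp) ?(dyck_size Dq) // downsE; last lia.
by case: nth; case: nth => /=; lia.
Qed.

Definition area_sequence m (a : seq nat) := [/\ size a = m.+1, nth 0 a m = 1 &
  forall k, k < m -> 2 <= nth 0 a k /\ nth 0 a k <= nth 0 a k.+1 + 1].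

Lemma area_sequence_area_seq m p : dyck m p -> area_sequence m (area_seq p).
Proof.
move=> D; have sz := dyck_size D; split; first by rewrite size_area_seq sz mulKn.
  rewrite (nth_area_seq sz (leqnn m)); apply: bigmax_id_eq; first lia.
    rewrite (on_path_downs _ D) // (_ : 2 * m + 1 - 1 = 2 * m); last lia.
    by rewrite leqnn (dyck_downs_end D) eqxx.
  by move=> t ht; rewrite (on_path_downs _ D) ?ltnn; [move=> /andP[]; lia | lia].
move=> k km; rewrite !(nth_area_seq sz) //; try lia.
have [a1 [aX dX]] := area_at_spec D (ltnW km).
set x := 2 * k + area_at p m k - 1 in aX dX.
have lt_xm : x < 2 * m.
  rewrite ltn_neqAle aX andbT; apply/eqP => ex.
  by move: dX; rewrite ex (dyck_downs_end D); lia.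
have down_x : nth false p x = false.
  apply/negP => up_x; have : downs p x.+1 = k by rewrite downsS ?sz // up_x dX addn0.
  by move=> /(area_at_max D lt_xm); rewrite -/x; lia.
have dx1 : downs p x.+1 = k.+1 by rewrite downsS ?sz // down_x dX addn1.
have := dyck_downs_double D lt_xm; have := area_at_max D lt_xm dx1.
by rewrite dx1 -/x; lia.
Qed.

Lemma count_ltnS (T : Type) (f : T -> nat) x s :
  count (fun k => f k < x.+1) s = count (fun k => f k < x) s + count (fun k => f k == x) s.
Proof. by elim: s => //= y s ->; case: (ltngtP (f y) x) => h /=; lia. Qed.

Lemma count_iota_ltn k m : count (fun j => j < k) (iota 0 m) = minn k m.
Proof.
elim: m => [|m IH]; first by rewrite minn0.
by rewrite -addn1 iotaD count_cat IH /= add0n addn0; case: (ltnP m k); lia.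
Qed.

Lemma sub_in_count (T : eqType) (a1 a2 : pred T) (s : seq T) :
  {in s, forall x, a1 x -> a2 x} -> count a1 s <= count a2 s.
Proof.
elim: s => //= y s IH sub12; have /= := sub12 y (mem_head y s).
have := IH (fun x xs => sub12 x (ltac:(by rewrite in_cons xs orbT))).
by case: (a1 y); case: (a2 y) => //= ? ?; lia.
Qed.

Section PathOfArea.

Variables (m : nat) (a : seq nat).
Hypothesis Ha : area_sequence m a.

(* [(2k + t - 1, t - 1)] lies on the path iff exactly [k] down steps precede
   it, so the [k]-th down step (counting from [0]) starts at [2k + a_k - 1]. *)
Definition down_step k := nth 0 a k + 2 * k - 1.

Definition path_of_area :=
  [seq i \notin map down_step (iota 0 m) | i <- iota 0 (2 * m)].

Definition downs_before x := count (fun k => down_step k < x) (iota 0 m).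

Lemma down_step_last : down_step m = 2 * m.
Proof. by have [_ am _] := Ha; rewrite /down_step am; lia. Qed.

Lemma down_step_ge k : k < m -> 2 * k + 1 <= down_step k.
Proof. by have [_ _ Hk] := Ha; move=> km; have := Hk k km; rewrite /down_step; lia. Qed.

Lemma down_step_lt j k : j < k -> k <= m -> down_step j < down_step k.
Proof.
have [_ _ Hk] := Ha; have step i : i < m -> down_step i < down_step i.+1.
  by move=> im; have := Hk i im; rewrite /down_step; lia.
move=> + km; elim: k km => // k IH km; rewrite ltnS leq_eqVlt => /orP[/eqP->|jk].
  exact: step.
exact: ltn_trans (IH (ltnW km) jk) (step k km).
Qed.

Lemma down_step_le j k : j <= k -> k <= m -> down_step j <= down_step k.
Proof.
by rewrite leq_eqVlt => /orP[/eqP->//|jk] km; apply/ltnW/down_step_lt.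
Qed.

Lemma size_path_of_area : size path_of_area = 2 * m.
Proof. by rewrite size_map size_iota. Qed.

Lemma downs_beforeS x :
  downs_before x.+1 = downs_before x + (x \in map down_step (iota 0 m)).
Proof.
have uniq_steps : uniq (map down_step (iota 0 m)).
  rewrite map_inj_in_uniq ?iota_uniq // => i j; rewrite !mem_iota !add0n.
  move=> /andP[_ im] /andP[_ jm] Eij; case: (ltngtP i j) => // ij.
    by have := down_step_lt ij (ltnW jm); rewrite Eij ltnn.
  by have := down_step_lt ij (ltnW im); rewrite Eij ltnn.
by rewrite /downs_before count_ltnS -count_uniq_mem // count_map.
Qed.

Lemma downs_path_of_area x : x <= 2 * m -> downs path_of_area x = downs_before x.
Proof.
elim: x => [|x IH] le_xm.
  by rewrite downs0 /downs_before; elim: (iota 0 m) => //= k s <-; rewrite ltn0.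
rewrite downsS ?size_path_of_area // IH ?downs_beforeS; last lia.
by rewrite (nth_map 0) ?size_iota // nth_iota // negbK.
Qed.

Lemma downs_before_down_step k : k <= m -> downs_before (down_step k) = k.
Proof.
move=> km; rewrite /downs_before (eq_in_count (a2 := fun j => j < k)).
  by rewrite count_iota_ltn; lia.
move=> j; rewrite mem_iota add0n => /andP[_ jm] /=; apply/idP/idP; last first.
  by move=> jk; exact: down_step_lt.
move=> lt_jk; rewrite ltnNge; apply/negP => kj.
by have := down_step_le kj (ltnW jm); lia.
Qed.

Lemma downs_before_gt k x : k < m -> down_step k < x -> k < downs_before x.
Proof.
move=> km lt_kx; rewrite -(_ : minn k.+1 m = k.+1); last lia.
rewrite -count_iota_ltn; apply: sub_in_count => j; rewrite mem_iota add0n => /andP[_ jm] /= jk.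
by have := @down_step_le j k (ltac:(lia)) (ltnW km); lia.
Qed.

Lemma downs_before_double x : x <= 2 * m -> 2 * downs_before x <= x.
Proof.
move=> xm; case E: (downs_before x) => [//|j].
have jm : j < m.
  have := count_size (fun k => down_step k < x) (iota 0 m).
  by rewrite size_iota -/(downs_before x) E.
suff : down_step j < x by have := down_step_ge jm; lia.
rewrite ltnNge; apply/negP => le_xj.
have : downs_before x <= j.
  apply: (@leq_trans (count (fun i => i < j) (iota 0 m)));
    last by rewrite count_iota_ltn geq_minl.
  apply: sub_in_count => i; rewrite mem_iota add0n => /andP[_ im] /= lt_ix.
  by rewrite ltnNge; apply/negP => ji; have := down_step_le ji (ltnW im); lia.
by rewrite E ltnn.
Qed.

Lemma dyck_path_of_area : dyck m path_of_area.
Proof.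
have sz := size_path_of_area.
have downs_end : count negb path_of_area = m.
  have := downs_path_of_area (leqnn (2 * m)); rewrite downs_oversize ?sz // => ->.
  by rewrite -down_step_last downs_before_down_step.
split=> //; split; last by have := count_id_negb path_of_area; rewrite sz downs_end; lia.
move=> j jm; have := count_id_negb (take j path_of_area).
rewrite size_take sz -/(downs path_of_area j) downs_path_of_area //.
by have := downs_before_double jm; case: ltnP; lia.
Qed.

Lemma area_seq_path_of_area : area_seq path_of_area = a.
Proof.
have [sa am Hk] := Ha; have D := dyck_path_of_area; have sz := size_path_of_area.
apply: (eq_from_nth (x0 := 0)) => [|k]; first by rewrite size_area_seq sz mulKn // sa.
rewrite size_area_seq sz mulKn // ltnS => km.
have ak : 1 <= nth 0 a k.
  case: (ltnP k m) => [/Hk[]|mk]; first lia.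
  by rewrite (_ : k = m) ?am //; lia.
have Xk : 2 * k + nth 0 a k - 1 = down_step k by rewrite /down_step; lia.
have Xkm : down_step k <= 2 * m by rewrite -down_step_last; apply: down_step_le.
rewrite (nth_area_seq sz km) /area_at; apply: bigmax_id_eq.
- by move: Xkm; rewrite /down_step; lia.
- rewrite (on_path_downs _ D) // Xk Xkm downs_path_of_area //.
  by rewrite (downs_before_down_step km) eqxx.
move=> t ht; rewrite (on_path_downs _ D); last lia.
move=> /andP[xm /eqP]; rewrite downs_path_of_area // leqNgt => downs_k.
apply/negP => lt_at; case: (ltnP k m) => [lt_km|le_mk].
  by have := @downs_before_gt k (2 * k + t - 1) lt_km (ltac:(lia)); lia.
by move: lt_at xm; rewrite (_ : k = m) ?am; lia.
Qed.

End PathOfArea.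

Section KupischToArea.

Variables (n : nat) (c : seq nat).
Hypotheses (n_gt0 : 0 < n) (Hc : sincere_kupisch n c) (c0 : nth 0 c 0 = n).

Lemma nth_nak_to_area k : k < n -> nth 0 (nak_to_area n c) k = kc n c k.+1 - n.-1.
Proof.
have [sz _ _] := Hc; move=> lt_kn.
rewrite /nak_to_area nth_cat size_map size_behead sz; case: ltnP => [lt_k|le_k].
  by rewrite (nth_map 0) ?size_behead ?sz // nth_behead kc_small //; lia.
have -> : k = n.-1 by lia.
by rewrite subnn prednK // kcn kc0E c0 /=; lia.
Qed.

Lemma area_sequence_nak_to_area : n \notin behead c -> area_sequence n.-1 (nak_to_area n c).
Proof.
have [sz kge kle] := Hc; move=> nb; have kc_neq := kc_neq_notin_behead n_gt0 Hc nb.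
split.
- by rewrite size_cat size_map size_behead sz addn1 prednK.
- by rewrite nth_nak_to_area ?prednK ?kcn ?kc0E ?c0; lia.
move=> k lt_kn; rewrite !nth_nak_to_area; try lia.
have /eqP := @kc_neq k.+1 (ltac:(lia)).
by have := kge k.+1; have := kge k.+2; have := kle k.+1; lia.
Qed.

Lemma bounce_map_step b : b < n ->
  bounce_map n c b.+1 = (bounce_step (nak_to_area n c) b).+1.
Proof.
have [_ kge _] := Hc; move=> lt_bn.
by rewrite /bounce_map /bounce_step nth_nak_to_area //; have := kge b.+1; lia.
Qed.

Lemma bounce_count_bounce_time D : size D = 2 * n.-1 ->
  area_seq D = nak_to_area n c -> bounce_count D = bounce_time n c 1.
Proof.
move=> sz E; have kc0 : kc n c 0 = n by rewrite kc0E.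
rewrite /bounce_count sz mulKn // E prednK // /bounce_time; apply: eq_find => d.
suff -> : iter d (bounce_map n c) 1 = (iter d (bounce_step (nak_to_area n c)) 0).+1.
  by apply/idP/idP => /eqP E'; apply/eqP; lia.
elim: d => //= d IH.
have := iter_bounce_map_le n_gt0 Hc kc0 d (ltac:(lia) : 1 <= n).
by rewrite IH => lt_bn; rewrite bounce_map_step.
Qed.

End KupischToArea.

Definition kupisch_normal n c := [/\ sincere_kupisch n c, nth 0 c 0 = n & n \notin behead c].

Lemma kupisch_normal_rot n c k : nakayama n c -> sincere n c -> finite_gldim n c ->
  k < n -> nth 0 (rot k c) 0 = n -> kupisch_normal n (rot k c).
Proof.
move=> Hn Hs Hf kn c0; have n0 : 0 < n by case: Hn.
have Hc := nakayama_sincere_kupisch Hn Hs; have Hc' := sincere_kupisch_rot n0 kn Hc.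
split=> //; have := (finite_gldimP n0 Hc).1 Hf.
have [sz' _ _] := Hc'.
by rewrite -(count_mem_rot _ k) (count_mem_head _ c0) ?sz' // => -[/count_memPn].
Qed.

Lemma normalized_kupisch_normal n c : normalized n c -> kupisch_normal n c.
Proof.
move=> [Hn [Hs [Hf c0]]]; rewrite -(rot0 c).
by apply: kupisch_normal_rot; rewrite ?rot0 //; case: Hn.
Qed.

Lemma rot_index_max n c : nakayama n c -> sincere n c -> finite_gldim n c ->
  index n c < n /\ nth 0 (rot (index n c) c) 0 = n.
Proof.
move=> Hn Hs Hf; have n0 : 0 < n by case: Hn.
have Hc := nakayama_sincere_kupisch Hn Hs; have [sz _ _] := Hc.
have : n \in c by rewrite -has_pred1 has_count ((finite_gldimP n0 Hc).1 Hf).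
by move=> nc; split; [rewrite -{2}sz index_mem | exact: nth_rot_index].
Qed.

Lemma kupisch_normal_rot_eq n c k : k < n -> kupisch_normal n c ->
  nth 0 (rot k c) 0 = n -> rot k c = c.
Proof.
move=> kn [[sz _ _] _ nb]; rewrite nth_rot ?sz ?addn0 ?modn_small; try lia.
case: k kn => [|k] kn ck; first exact: rot0.
by move: nb; rewrite -ck -nth_behead mem_nth // size_behead sz; lia.
Qed.

Lemma nak_to_area_inj n c c' : 0 < n -> kupisch_normal n c -> kupisch_normal n c' ->
  nak_to_area n c = nak_to_area n c' -> c = c'.
Proof.
move=> n0 [Hc c0 _] [Hc' c0' _] E; have [sz kge _] := Hc; have [sz' kge' _] := Hc'.
apply: (eq_from_nth (x0 := 0)) => [|[_|i]]; rewrite ?sz ?sz' // ?c0 ?c0' // => lt_in.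
have := congr1 (nth 0 ^~ i) E; rewrite !nth_nak_to_area //; try lia.
by rewrite -!(@kc_small n) //; have := kge i.+1; have := kge' i.+1; lia.
Qed.

Definition area_to_nak n (a : seq nat) := n :: [seq x + n.-1 | x <- take n.-1 a].

Section AreaToNak.

Variables (n : nat) (a : seq nat).
Hypotheses (n_gt0 : 0 < n) (Ha : area_sequence n.-1 a).

Lemma nak_to_areaK : nak_to_area n (area_to_nak n a) = a.
Proof.
have [sa am _] := Ha; rewrite /nak_to_area /= -map_comp.
rewrite (eq_map (g := id)) => [|x /=]; last by rewrite addnK.
by rewrite map_id -[RHS](cat_take_drop n.-1 a) (drop_nth 0) ?sa // am drop_oversize ?sa.
Qed.

Lemma nth_area_ge1 k : k <= n.-1 -> 1 <= nth 0 a k.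
Proof.
have [_ am Hk] := Ha; rewrite leq_eqVlt => /orP[/eqP->|/Hk[]]; [by rewrite am | lia].
Qed.

Lemma kc_area_to_nak i : 0 < i <= n -> kc n (area_to_nak n a) i = nth 0 a i.-1 + n.-1.
Proof.
have [sa am _] := Ha; move=> /andP[i0 le_in].
have [lt_in|ge_in] := ltnP i n; last first.
  by rewrite (_ : i = n) ?kcn ?kc0E /= ?am //; lia.
rewrite kc_small // -(prednK i0) /= (nth_map 0); last by rewrite size_take sa ltnSn; lia.
by rewrite nth_take //; lia.
Qed.

Lemma sincere_kupisch_area_to_nak : sincere_kupisch n (area_to_nak n a).
Proof.
have [sa _ Hk] := Ha.
have kge j : j < n -> n <= kc n (area_to_nak n a) j.
  case: (posnP j) => [-> _|j0 lt_jn]; first by rewrite kc0E.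
  by rewrite kc_area_to_nak ?j0 ?(ltnW lt_jn) //; have := @nth_area_ge1 j.-1; lia.
have kle j : j < n -> kc n (area_to_nak n a) j <= kc n (area_to_nak n a) j.+1 + 1.
  move=> lt_jn; rewrite (@kc_area_to_nak j.+1) //=.
  case: (posnP j) => [->|j0]; first by rewrite kc0E /=; have := @nth_area_ge1 0; lia.
  by rewrite kc_area_to_nak ?j0 ?(ltnW lt_jn) //; have := Hk j.-1; rewrite prednK //; lia.
split=> [|i|i]; first by rewrite /= size_map size_take sa ltnSn prednK.
  by rewrite -kc_modn; apply/kge/ltn_pmod.
by rewrite -kc_modn -kcS_modn; apply/kle/ltn_pmod.
Qed.

Lemma normalized_area_to_nak : normalized n (area_to_nak n a).
Proof.
have [sa _ Hk] := Ha.
have Hc := sincere_kupisch_area_to_nak; have c0 : nth 0 (area_to_nak n a) 0 = n by [].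
have [Hn Hs] := sincere_kupisch_nakayama n_gt0 Hc.
split=> //; split=> //; split=> //.
suff nb : n \notin behead (area_to_nak n a).
  have [le_gldim _] := is_gldim_max_unique n_gt0 Hc c0 nb.
  by exists (2 * bounce_time n (area_to_nak n a) 1).
apply/mapP => -[x /(nthP 0)[k]]; rewrite size_take sa ltnSn => kn <-.
(* [nthP] leaves [nth 0 a k] at the [eqType] sort of [nat], which [lia] would
   not identify with the same term in [Hk]. *)
by rewrite nth_take //; case: (Hk k kn); move: (nth 0 a k) => v; lia.
Qed.

End AreaToNak.

Theorem theorem4p7 (n : nat) : 0 < n ->
  (* finite global dimension iff exactly one c_i equals n *)
  (forall c, nakayama n c -> sincere n c ->
     (finite_gldim n c <-> count_mem n c = 1%N)) /\
  (* every class has a rotation with c_0 = n *)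
  (forall c, nakayama n c -> sincere n c -> finite_gldim n c ->
     exists k, k < n /\ nth 0 (rot k c) 0 = n) /\
  (* the map to Dyck paths of semilength n-1 is well defined (unique D) *)
  (forall c, normalized n c ->
     exists D, dyck n.-1 D /\ area_seq D = nak_to_area n c /\
       forall D', dyck n.-1 D' -> area_seq D' = nak_to_area n c -> D' = D) /\
  (* it is constant on isomorphism classes *)
  (forall c c', normalized n c -> normalized n c' -> nak_iso n c c' ->
     nak_to_area n c = nak_to_area n c') /\
  (* injective on isomorphism classes *)
  (forall c c', normalized n c -> normalized n c' ->
     nak_to_area n c = nak_to_area n c' -> nak_iso n c c') /\
  (* surjective onto Dyck paths of semilength n-1 *)
  (forall D, dyck n.-1 D -> exists c, normalized n c /\ area_seq D = nak_to_area n c) /\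
  (* gldim A = 2 * bounce count *)
  (forall c k D, nakayama n c -> sincere n c -> finite_gldim n c ->
     k < n -> nth 0 (rot k c) 0 = n ->
     dyck n.-1 D -> area_seq D = nak_to_area n (rot k c) ->
     is_gldim n c (2 * bounce_count D)).
Proof.
move=> n0; split.
  by move=> c Hn Hs; apply: finite_gldimP n0 (nakayama_sincere_kupisch Hn Hs).
split.
  by move=> c Hn Hs Hf; exists (index n c); apply: rot_index_max.
split.
  move=> c /normalized_kupisch_normal [Hc c0 nb].
  have Ha := area_sequence_nak_to_area n0 Hc c0 nb.
  exists (path_of_area n.-1 (nak_to_area n c)).
  split; [exact: dyck_path_of_area | split; first exact: area_seq_path_of_area].
  move=> D' DD' ED'; apply: area_seq_inj DD' (dyck_path_of_area Ha) _.
  by rewrite ED' area_seq_path_of_area.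
split.
  move=> c c' /normalized_kupisch_normal Nc /normalized_kupisch_normal [_ c0 _] [k [kn Ec']].
  by move: c0; rewrite Ec' => /(kupisch_normal_rot_eq kn Nc) ->.
split.
  move=> c c' /normalized_kupisch_normal Nc /normalized_kupisch_normal Nc' E.
  by exists 0; rewrite rot0 (nak_to_area_inj n0 Nc Nc' E).
split.
  move=> D /area_sequence_area_seq Ha; exists (area_to_nak n (area_seq D)).
  by rewrite nak_to_areaK //; split=> //; apply: normalized_area_to_nak.
move=> c k D Hn Hs Hf kn c0 DD E; have [Hc' c0' nb] := kupisch_normal_rot Hn Hs Hf kn c0.
have [sz _ _] := nakayama_sincere_kupisch Hn Hs; apply: (is_gldim_rot n0 sz kn).
rewrite (bounce_count_bounce_time n0 Hc' c0' (dyck_size DD) E).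
exact: is_gldim_max_unique.
Qed.
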